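(* Let $n$ be a positive integer and $x\in\Gamma_n$. Then \[ \textsc{BPSP}(x)=\xi_n\bigl(\sigma_{\mathrm{RF}}(x)\bigr)-\textsc{MaxCut}(G_x)=n-\tfrac12+\tfrac12\,\#_{\mathrm{dl}}(x)+\tfrac12\,W_{\mathrm{tot}}(G_x)-\textsc{MaxCut}(G_x), \] and \[ \widetilde{\textsc{BPSP}^*}(x)=\textsc{MaxCut}^*(G_x). \]
   Context: Let $[n]=\{1,\dots,n\}$. $\Gamma_n$ is the set of words $x=(x_1,\dots,x_{2n})\in[n]^{2n}$ in which every symbol $i\in[n]$ occurs exactly twice. Colours are the formal symbols $r,b$; $\neg$ swaps $r$ and $b$, $\neg^0$ is the identity and $\neg^1=\neg$. $[\,\cdot\,]$ is the Iverson bracket (1 if true, 0 otherwise). For $i\in[2n-1]$, $\eta(x,i)=[x_{i+1}\in\{x_1,\dots,x_i\}]\oplus[x_i\in\{x_1,\dots,x_{i-1}\}]$ ($\oplus$ = exclusive or). The set of valid colourings is $\Xi_n(x)=\{f\in\{r,b\}^{2n}:\ \forall i\neq j,\ x_i=x_j\Rightarrow f_i\neq f_j\}$, and for $f\in\{r,b\}^{2n}$, $\xi_n(f)=\sum_{i=1}^{2n-1}[f_i\neq f_{i+1}]$. $\textsc{BPSP}(x)=\min_{f\in\Xi_n(x)}\xi_n(f)$. The red-first colouring $\sigma_{\mathrm{RF}}(x)\in\{r,b\}^{2n}$ has $i$-th entry $r$ if $x_i\notin\{x_1,\dots,x_{i-1}\}$ and $b$ otherwise. For $z\in\{r,b\}^n$,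 $\mathcal E_n(x,z)\in\{r,b\}^{2n}$ has $i$-th entry $\neg^{[x_i\in\{x_1,\dots,x_{i-1}\}]}z_{x_i}$, and $\tilde\xi_n(x,z)=\xi_n(\mathcal E_n(x,z))$; $\widetilde{\textsc{BPSP}^*}(x)=\operatorname{argmin}_{z\in\{r,b\}^n}\tilde\xi_n(x,z)$ (a set). For a subset $e\subseteq[n]$, $\theta_x(e)=-\sum_{i=1}^{2n-1}(-1)^{\eta(x,i)}\delta_{e,\{x_i,x_{i+1}\}}$. The BPSP graph is the weighted graph $G_x=(V_x,E_x,W_x)$ with $V_x=[n]$, $E_x=\{\{x_i,x_{i+1}\}: i\in[2n-1],\ x_i\neq x_{i+1},\ \theta_x(\{x_i,x_{i+1}\})\neq0\}$ and $W_x=\theta_x|_{E_x}$. For a weighted graph $G=(V,E,W)$ with $V=[n]$: $W_{\mathrm{tot}}(G)=\sum_{\{i,j\}\in E}W(\{i,j\})$; for $z\in\{r,b\}^n$, $\mathrm{wt}_G(z)=\sum_{\{i,j\}\in E}W(\{i,j\})[z_i\neq z_j]$; $\textsc{MaxCut}(G)=\max_{z\in\{r,b\}^n}\mathrm{wt}_G(z)$ and $\textsc{MaxCut}^*(G)=\operatorname{argmax}_{z\in\{r,b\}^n}\mathrm{wt}_G(z)$. The double letter count is $\#_{\mathrm{dl}}(x)=|\{i\in[2n-1]: x_i=x_{i+1}\}|$. *)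

From mathcomp Require Import all_boot all_order all_algebra.
Set Implicit Arguments. Unset Strict Implicit. Unset Printing Implicit Defensive.
Import Order.TTheory GRing.Theory Num.Theory.
Local Open Scope ring_scope.

(* Positions 1..2n are 'I_(2*n) (0-based), symbols 1..n are 'I_n (0-based).
   Colours: bool, with r := true, b := false, and neg := negb. *)
Notation col := bool (only parsing).
Definition rc : col := true.
Definition bc : col := false.

Definition word (n : nat) := {ffun 'I_(2 * n) -> 'I_n}.
Definition colouring (n : nat) := {ffun 'I_(2 * n) -> col}.

Definition Gamma (n : nat) (x : word n) : bool :=
  [forall s : 'I_n, #|[set i | x i == s]| == 2].

Definition seen n (x : word n) (i : 'I_(2 * n)) : bool :=
  [exists j : 'I_(2 * n), (j < i)%N && (x j == x i)].

(* eta(x,i) for the consecutive pair (i, j) with j = i+1 *)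
Definition eta n (x : word n) (i j : 'I_(2 * n)) : bool :=
  seen x j (+) seen x i.

Definition Xi n (x : word n) : {set colouring n} :=
  [set f : colouring n | [forall i, forall j,
      ((i != j) && (x i == x j)) ==> (f i != f j)]].

Definition xi n (f : colouring n) : nat :=
  (\sum_(i : 'I_(2 * n)) \sum_(j : 'I_(2 * n) | val j == (val i).+1) (f i != f j : nat))%N.

(* BPSP(x) = min over valid colourings; the default 2n exceeds every xi value
   (xi <= 2n-1), so this is the true minimum whenever Xi x is nonempty. *)
Definition BPSP n (x : word n) : nat :=
  (\big[minn/(2 * n)%N]_(f in Xi x) xi f)%N.

Definition sigma_RF n (x : word n) : colouring n :=
  [ffun i => if seen x i then bc else rc].

Definition Enc n (x : word n) (z : {ffun 'I_n -> col}) : colouring n :=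
  [ffun i => if seen x i then ~~ z (x i) else z (x i)].

Definition xitilde n (x : word n) (z : {ffun 'I_n -> col}) : nat := xi (Enc x z).

Definition BPSPstar_tilde n (x : word n) : {set {ffun 'I_n -> col}} :=
  [set z | [forall z', (xitilde x z <= xitilde x z')%N]].

Definition theta n (x : word n) (e : {set 'I_n}) : int :=
  - \sum_(i : 'I_(2 * n)) \sum_(j : 'I_(2 * n) | val j == (val i).+1)
      ((-1) ^+ eta x i j * (e == [set x i; x j])%:R).

(* weighted graph on vertex set 'I_n, edges as 2-element subsets *)
Record wgraph (n : nat) := WGraph {
  wedges : {set {set 'I_n}};
  wweight : {set 'I_n} -> int }.

Definition BPSP_graph n (x : word n) : wgraph n :=
  WGraph [set e : {set 'I_n} |
            [exists i : 'I_(2 * n), exists j : 'I_(2 * n),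
               [&& val j == (val i).+1, x i != x j & e == [set x i; x j]]]
            && (theta x e != 0)]
         (theta x).

Definition Wtot n (G : wgraph n) : int := \sum_(e in wedges G) wweight G e.

Definition cut n (z : {ffun 'I_n -> col}) (e : {set 'I_n}) : bool :=
  [exists i in e, exists j in e, z i != z j].

Definition wt n (G : wgraph n) (z : {ffun 'I_n -> col}) : int :=
  \sum_(e in wedges G) wweight G e * (cut z e)%:R.

Definition z_all_red n : {ffun 'I_n -> col} := [ffun => rc].

Definition MaxCut n (G : wgraph n) : int :=
  \big[Num.max/wt G (z_all_red n)]_(z : {ffun 'I_n -> col}) wt G z.

Definition MaxCutStar n (G : wgraph n) : {set {ffun 'I_n -> col}} :=
  [set z | wt G z == MaxCut G].

Definition dl_count n (x : word n) : nat :=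
  (\sum_(i : 'I_(2 * n)) \sum_(j : 'I_(2 * n) | val j == (val i).+1) (x i == x j : nat))%N.

From mathcomp Require Import all_boot all_order all_algebra.
From mathcomp Require Import lra.
Set Implicit Arguments. Unset Strict Implicit. Unset Printing Implicit Defensive.
Import Order.TTheory GRing.Theory Num.Theory.
Local Open Scope ring_scope.

(* A valid colouring is determined by the colours z of the first occurrences
   of the symbols: it is [Enc x z], and when every symbol occurs twice every
   [Enc x z] is valid.  At consecutive positions, [Enc x z] changes colour
   exactly when the red-first colouring does ([eta]) xor z separates the two
   letters; with the signs (-1)^eta this sums to
   [xi (Enc x z) = xi (sigma_RF x) - wt G_x z], so minimising colour changes
   is maximising the cut.  For the closed form,
   [2 eta = 1 + [x_i = x_(i+1)] - (-1)^eta [x_i != x_(i+1)]] pointwise, since a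
   double letter always has eta = 1; summing over the 2n - 1 consecutive pairs
   gives [2 xi (sigma_RF x) = 2n - 1 + #dl(x) + W_tot(G_x)]. *)

Section AdjacentSums.
Variable m : nat.
Implicit Types F G : 'I_m -> 'I_m -> int.

Definition adj_sum F : int :=
  \sum_(i < m) \sum_(j < m | val j == (val i).+1) F i j.

Lemma eq_adj_sum F G :
  (forall i j : 'I_m, val j == (val i).+1 -> F i j = G i j) ->
  adj_sum F = adj_sum G.
Proof. by move=> eqFG; apply: eq_bigr => i _; apply: eq_bigr => j; apply: eqFG. Qed.

Lemma adj_sumD F G : adj_sum (fun i j => F i j + G i j) = adj_sum F + adj_sum G.
Proof. by rewrite -big_split; apply: eq_bigr => i _; apply: big_split. Qed.

Lemma adj_sumN F : adj_sum (fun i j => - F i j) = - adj_sum F.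
Proof. by rewrite -sumrN; apply: eq_bigr => i _; apply: sumrN. Qed.

Lemma natr_adj_sum (F : 'I_m -> 'I_m -> nat) :
  (\sum_(i < m) \sum_(j < m | val j == (val i).+1) F i j)%N%:R
  = adj_sum (fun i j => (F i j)%:R).
Proof. by rewrite natr_sum; apply: eq_bigr => i _; rewrite natr_sum. Qed.

Lemma card_adj_pairs :
  (\sum_(i < m) \sum_(j < m | val j == (val i).+1) 1 = m.-1)%N.
Proof.
have succ_count (i : 'I_m) : (\sum_(j < m | val j == i.+1) 1 = (i.+1 < m))%N.
  case: ltnP => [lt_im | le_mi]; first by rewrite (big_pred1 (Ordinal lt_im)).
  by rewrite big_pred0 // => j; apply/negbTE; rewrite neq_ltn (leq_trans (ltn_ord j)).
rewrite (eq_bigr _ (fun i _ => succ_count i)); case: m => [|k]; first by rewrite big_ord0.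
rewrite big_ord_recr /= ltnn addn0 (eq_bigr (fun _ => 1%N)) => [|i _].
  by rewrite sum_nat_const card_ord muln1.
by rewrite ltnS ltn_ord.
Qed.

End AdjacentSums.

Lemma cut_pair n (z : {ffun 'I_n -> bool}) (a b : 'I_n) :
  cut z [set a; b] = (z a != z b).
Proof.
apply/idP/idP => [|zab]; last first.
  by apply/existsP; exists a; rewrite setU11; apply/existsP; exists b; rewrite setU1r ?set11.
case/existsP=> i /andP[+ /existsP[j /andP[]]]; rewrite !inE.
by case/orP=> /eqP-> /orP[]/eqP->; rewrite ?eqxx // eq_sym.
Qed.

Section MaxCut.
Variables (n : nat) (G : wgraph n).

Lemma wt_le_MaxCut z : wt G z <= MaxCut G.
Proof. exact: le_bigmax. Qed.

Lemma MaxCut_attained : exists z, wt G z = MaxCut G.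
Proof.
case: (@arg_maxP _ _ _ (z_all_red n) predT (wt G)) => // z _ z_max.
by exists z; apply/le_anti; rewrite wt_le_MaxCut /=; apply: bigmax_le => [|z' _]; apply: z_max.
Qed.

End MaxCut.

Section Word.
Variables (n : nat) (x : word n).
Hypothesis x_Gamma : Gamma x.

Notation pos := 'I_(2 * n).
Notation G := (BPSP_graph x).

Lemma seen_later (i j : pos) : (i < j)%N -> x i = x j -> seen x j.
Proof. by move=> lt_ij xij; apply/existsP; exists i; rewrite lt_ij xij eqxx. Qed.

Lemma Gamma_earlier_unseen (i j : pos) : (i < j)%N -> x i = x j -> ~~ seen x i.
Proof.
move=> lt_ij xij; apply/existsP => -[k /andP[lt_ki /eqP xki]].
have /forallP/(_ (x i))/eqP := x_Gamma.
have sub : [set k; i; j] \subset [set l | x l == x i].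
  by apply/subsetP => l; rewrite !inE => /orP[/orP[]|] /eqP->; rewrite ?xki ?xij.
move/subset_leq_card: sub => /[swap] ->.
have neq (a b : pos) : (a < b)%N -> (a == b) = false by move=> ?; apply: ltn_eqF.
by rewrite -setUA !cardsU1 cards1 !inE (neq _ _ lt_ki) (neq _ _ lt_ij)
  (neq _ _ (ltn_trans lt_ki lt_ij)).
Qed.

Lemma first_occurrence_uniq (i k : pos) :
  ~~ seen x i -> ~~ seen x k -> x k = x i -> k = i.
Proof.
move=> si sk xki; apply/val_inj; case: (ltngtP k i) => // [lt_ki|lt_ik].
  by rewrite (seen_later lt_ki xki) in si.
by rewrite (seen_later lt_ik (esym xki)) in sk.
Qed.

Lemma exists_first_occurrence (i : pos) : exists2 k, x k = x i & ~~ seen x k.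
Proof.
case: (@arg_minnP _ i (fun k => x k == x i) val (eqxx _)) => k /eqP xk min_k.
exists k => //; apply/existsP => -[j /andP[lt_jk /eqP xj]].
by move: (min_k j); rewrite xj xk eqxx leqNgt lt_jk => /(_ isT).
Qed.

Lemma Xi_Enc (f : colouring n) : f \in Xi x -> exists z, f = Enc x z.
Proof.
rewrite inE => /forallP valid_f.
exists [ffun s => if [pick k | (x k == s) && ~~ seen x k] is Some k then f k else rc].
apply/ffunP => i; rewrite !ffunE; case: pickP => [k /andP[/eqP xk sk] | none].
  case si: (seen x i); last by rewrite (first_occurrence_uniq (negbT si) sk xk).
  have ik : i != k by apply: contraTneq si => ->.
  move/forallP/(_ k): (valid_f i); rewrite ik xk eqxx /=.
  by case: (f i); case: (f k).
by have [k xk sk] := exists_first_occurrence i; move: (none k); rewrite xk eqxx sk.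
Qed.

Lemma Enc_in_Xi z : Enc x z \in Xi x.
Proof.
rewrite inE; apply/forallP => i; apply/forallP => j.
apply/implyP => /andP[ij /eqP xij]; rewrite !ffunE -xij.
suff : seen x i != seen x j by case: (seen x i); case: (seen x j); case: (z (x i)).
case: (ltngtP i j) => [lt_ij | lt_ji | /val_inj eq_ij]; last by rewrite eq_ij eqxx in ij.
  by rewrite (seen_later lt_ij xij) (negPf (Gamma_earlier_unseen lt_ij xij)).
by rewrite (seen_later lt_ji (esym xij)) (negPf (Gamma_earlier_unseen lt_ji (esym xij))).
Qed.

Definition adjacent_letters (e : {set 'I_n}) : bool :=
  [exists i : pos, exists j : pos,
     [&& val j == (val i).+1, x i != x j & e == [set x i; x j]]].

Lemma adjacent_lettersE (i j : pos) :
  val j == (val i).+1 -> adjacent_letters [set x i; x j] = (x i != x j).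
Proof.
move=> ij; apply/idP/idP => [|xij]; last first.
  by apply/existsP; exists i; apply/existsP; exists j; rewrite ij xij eqxx.
case/existsP=> i' /existsP[j' /and3P[_ xij' /eqP pairs]]; apply: contraNneq xij' => xij.
rewrite -xij setUid in pairs.
have /set1P-> : x i' \in [set x i] by rewrite pairs setU11.
by have /set1P-> : x j' \in [set x i] by rewrite pairs !inE eqxx orbT.
Qed.

Lemma BPSP_graph_sum (c : {set 'I_n} -> int) :
  \sum_(e in wedges G) wweight G e * c e
  = - adj_sum (fun i j => (-1) ^+ eta x i j * ((x i != x j)%:R * c [set x i; x j])).
Proof.
have drop_zero_weights :
    \sum_(e in wedges G) wweight G e * c e
    = \sum_(e | adjacent_letters e) theta x e * c e.
  rewrite big_mkcond [RHS]big_mkcond; apply: eq_bigr => e _; rewrite inE -/(adjacent_letters e).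
  by case: (adjacent_letters e); case: eqVneq => //= ->; rewrite mul0r.
rewrite drop_zero_weights /theta.
under eq_bigr => e _ do rewrite mulNr big_distrl /=.
rewrite sumrN; congr (- _); rewrite exchange_big /=; apply: eq_bigr => i _.
under eq_bigr => e _ do rewrite big_distrl /=.
rewrite exchange_big /=; apply: eq_bigr => j ij.
under eq_bigr => e _ do rewrite -mulrA.
rewrite -big_distrr /= -(adjacent_lettersE ij); congr (_ * _).
case: (boolP (adjacent_letters _)) => [adj | nadj].
  rewrite mul1r (bigD1 [set x i; x j]) //= eqxx mul1r big1 ?addr0 // => e /andP[_ ne].
  by rewrite (negbTE ne) mul0r.
rewrite mul0r big1 // => e adj.
have /negPf-> : e != [set x i; x j] by apply: contraNneq nadj => <-.
by rewrite mul0r.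
Qed.

Lemma wt_BPSP_graph z :
  wt G z = - adj_sum (fun i j => (-1) ^+ eta x i j * (z (x i) != z (x j))%:R).
Proof.
rewrite /wt BPSP_graph_sum; congr (- _); apply: eq_adj_sum => i j _.
by rewrite cut_pair; case: eqVneq => [->|]; rewrite ?eqxx ?mul0r ?mul1r.
Qed.

Lemma Wtot_BPSP_graph :
  Wtot G = - adj_sum (fun i j => (-1) ^+ eta x i j * (x i != x j)%:R).
Proof.
rewrite /Wtot; under eq_bigr => e _ do rewrite -[wweight _ e]mulr1.
by rewrite (BPSP_graph_sum (fun=> 1)); under eq_adj_sum => i j _ do rewrite mulr1.
Qed.

Lemma xi_sigma_RF : (xi (sigma_RF x))%:R = adj_sum (fun i j => (eta x i j)%:R).
Proof.
rewrite natr_adj_sum; apply: eq_adj_sum => i j _.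
by rewrite !ffunE /eta; case: (seen x i); case: (seen x j).
Qed.

Lemma xi_Enc z : (xi (Enc x z))%:R = (xi (sigma_RF x))%:R - wt G z :> int.
Proof.
(* The right-hand cast is elaborated through a different (convertible) ring
   instance of [int], so [xi_sigma_RF] needs an explicit pattern. *)
rewrite wt_BPSP_graph opprK [(xi (sigma_RF x))%:R]xi_sigma_RF natr_adj_sum -adj_sumD.
apply: eq_adj_sum => i j _; rewrite !ffunE /eta.
by case: (seen x i); case: (seen x j); case: (z (x i)); case: (z (x j)).
Qed.

Lemma xi_Enc_leq z z' :
  (xi (Enc x z) <= xi (Enc x z'))%N = (wt G z' <= wt G z).
Proof. by rewrite -(ler_nat int) !xi_Enc lerD2l lerN2. Qed.

Lemma eta_double_letter (i j : pos) :
  val j == (val i).+1 -> x i = x j -> eta x i j.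
Proof.
move=> /eqP ij xij; have lt_ij : (i < j)%N by rewrite ij.
by rewrite /eta (seen_later lt_ij xij) (negPf (Gamma_earlier_unseen lt_ij xij)).
Qed.

Lemma twice_xi_sigma_RF :
  2 * (xi (sigma_RF x))%:R = ((2 * n).-1)%:R + (dl_count x)%:R + Wtot G :> int.
Proof.
rewrite [(xi _)%:R]xi_sigma_RF mulr_natl mulr2n -adj_sumD -card_adj_pairs /dl_count.
rewrite !natr_adj_sum Wtot_BPSP_graph -adj_sumN -!adj_sumD; apply: eq_adj_sum => i j ij.
case: (eqVneq (x i) (x j)) => [xij | _]; first by rewrite (eta_double_letter ij xij).
by case: (eta x i j).
Qed.

Lemma xi_le (f : colouring n) : (xi f <= (2 * n).-1)%N.
Proof.
by rewrite -card_adj_pairs; apply: leq_sum => i _; apply: leq_sum => j _; apply: leq_b1.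
Qed.

Lemma BPSP_sigma_RF_MaxCut : (BPSP x)%:R = (xi (sigma_RF x))%:R - MaxCut G :> int.
Proof.
have [zm wt_zm] := MaxCut_attained G.
suff -> : BPSP x = xi (Enc x zm) by rewrite xi_Enc wt_zm.
apply/anti_leq/andP; split; first exact: (@bigmin_le_cond _ nat _ _ _ _ _ (Enc_in_Xi zm)).
apply: (@le_bigmin _ nat) => [|f /Xi_Enc[z ->]]; first exact: leq_trans (xi_le _) (leq_pred _).
by rewrite leEnat xi_Enc_leq wt_zm wt_le_MaxCut.
Qed.

Lemma BPSPstar_tilde_MaxCutStar : BPSPstar_tilde x = MaxCutStar G.
Proof.
have [zm wt_zm] := MaxCut_attained G.
apply/setP => z; rewrite !inE; apply/forallP/eqP => [z_min | wt_z z'].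
  by apply/le_anti; rewrite wt_le_MaxCut -wt_zm -xi_Enc_leq z_min.
by rewrite /xitilde xi_Enc_leq wt_z wt_le_MaxCut.
Qed.

End Word.

Theorem corollary4 (n : nat) (x : word n) :
  (0 < n)%N -> Gamma x ->
  [/\ (BPSP x)%:R = (xi (sigma_RF x))%:R - (MaxCut (BPSP_graph x))%:~R :> rat,
      (xi (sigma_RF x))%:R - (MaxCut (BPSP_graph x))%:~R
        = n%:R - 1 / 2 + (dl_count x)%:R / 2 + (Wtot (BPSP_graph x))%:~R / 2
          - (MaxCut (BPSP_graph x))%:~R :> rat
    & BPSPstar_tilde x = MaxCutStar (BPSP_graph x)].
Proof.
move=> n_gt0 x_Gamma; split; last exact: BPSPstar_tilde_MaxCutStar.
  move/(congr1 (intr : int -> rat)): (BPSP_sigma_RF_MaxCut x_Gamma).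
  by rewrite rmorphB /= !rmorph_nat.
move/(congr1 (intr : int -> rat)): (twice_xi_sigma_RF x_Gamma).
rewrite rmorphM !rmorphD /= !rmorph_nat -subn1 natrB ?muln_gt0 // natrM.
lra.
Qed.
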